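(* Let $n\ge 2$ and let $B$ be an $n\times n$ agreement matrix. If $H(X_B^+)=0$ and $B$ has exactly $m$ non-null rows, then $IA_\epsilon(B)$ exists and equals $(n-m)/n$.
   Context: An $n\times n$ agreement matrix $B$ has nonnegative entries $B[y][x]$ (row $y$, column $x$), not all zero. A row (column) is non-null if not all of its entries are $0$. For any $n\times n$ matrix $M$ with nonnegative real entries not all zero, let $S_M=\sum_{y,x}M[y][x]$ and define random variables $X_M$ on $\{1,\dots,n\}$ with $P(X_M=x)=\sum_yM[y][x]/S_M$, $Y_M$ with $P(Y_M=y)=\sum_xM[y][x]/S_M$, and the joint variable $X_MY_M$ with $P(X_MY_M=(y,x))=M[y][x]/S_M$. $H$ is Shannon entropy in base 2, defined only when all probabilities are positive. The information agreement is $IA(M)=\frac{H(X_M)+H(Y_M)-H(X_MY_M)}{\min\{H(X_M),H(Y_M)\}}$. For $\epsilon>0$, the $0$-freed matrix $B_\epsilon$ is obtained from $B$ by replacing every zero entry by $\epsilon$, and $IA_\epsilon(B)=\lim_{\epsilon\to0^+}IA(B_\epsilon)$. For a random variable $Z$, the refined variable $Z^+$ is $Z$ restricted to values of positive probability, with $H(Z^+)=-\sum_{z:\,p_Z(z)>0}p_Z(z)\log_2p_Z(z)$. *)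

From HB Require Import structures.
From mathcomp Require Import all_boot all_order all_algebra.
From mathcomp Require Import all_classical all_reals all_analysis.
Set Implicit Arguments. Unset Strict Implicit. Unset Printing Implicit Defensive.
Import Order.TTheory GRing.Theory Num.Theory.
Local Open Scope ring_scope.

Section Agreement.
Variables (R : realType) (n : nat).

Definition log2 (x : R) : R := ln x / ln 2.

(* When all probabilities are positive this
   is the usual H; in general it is H(Z^+) (the refined variable). *)
Definition entropy (I : finType) (p : I -> R) : R :=
  - \sum_(i | 0 < p i) p i * log2 (p i).

Definition Ssum (M : 'M[R]_n) : R := \sum_(y < n) \sum_(x < n) M y x.

Definition pX (M : 'M[R]_n) (x : 'I_n) : R := (\sum_(y < n) M y x) / Ssum M.
Definition pY (M : 'M[R]_n) (y : 'I_n) : R := (\sum_(x < n) M y x) / Ssum M.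
Definition pXY (M : 'M[R]_n) (yx : 'I_n * 'I_n) : R := M yx.1 yx.2 / Ssum M.

Definition HX (M : 'M[R]_n) : R := entropy (pX M).
Definition HY (M : 'M[R]_n) : R := entropy (pY M).
Definition HXY (M : 'M[R]_n) : R := entropy (pXY M).

Definition IA (M : 'M[R]_n) : R :=
  (HX M + HY M - HXY M) / Num.min (HX M) (HY M).

Definition zero_freed (B : 'M[R]_n) (eps : R) : 'M[R]_n :=
  \matrix_(y, x) (if B y x == 0 then eps else B y x).

Definition agreement_matrix (B : 'M[R]_n) : Prop :=
  (forall y x, 0 <= B y x) /\ (exists y x, B y x != 0).

Definition non_null_rows (B : 'M[R]_n) : nat :=
  #|[set y : 'I_n | [exists x, B y x != 0]]|.

End Agreement.

From HB Require Import structures.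
From mathcomp Require Import all_boot all_order all_algebra.
From mathcomp Require Import all_classical all_reals all_analysis.
From mathcomp Require Import ring lra.
Set Implicit Arguments. Unset Strict Implicit. Unset Printing Implicit Defensive.
Import Order.TTheory GRing.Theory Num.Theory.
Import numFieldNormedType.Exports.
Local Open Scope ring_scope.
Local Open Scope classical_set_scope.

(* All the mass of B lies in one column x0, since the only distribution of
   entropy 0 is a point mass.  Let b be that column, s its sum and k = n - m
   its number of zeros.  Then B_e has column sums s + k e and n e (n - 1
   times), row sums b_y + (n - 1) e and n e (k times), and total mass
   N = s + (k + n (n - 1)) e, so each of H(X), H(Y), H(XY) is
   (xlnx N - sum of xlnx of the weights) / (N ln 2), where xlnx w = w ln w.
   Using xlnx (c e) = xlnx c e + c xlnx e and xlnx (c + d e) = xlnx c + O(e),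
   the numerator of IA is -k (n - 1) xlnx e + O(e) and N ln 2 H(X) is
   -n (n - 1) xlnx e + O(e); as e = o(xlnx e) the ratio tends to k / n.
   Finally min(H(X), H(Y)) = H(X) near 0: for m = 1 they coincide, and for
   m >= 2 the difference N ln 2 (H(Y) - H(X)) tends to xlnx s - sum_y xlnx b_y,
   which is positive by strict superadditivity of xlnx. *)

Section XLogX.
Variable R : realType.
Implicit Types (x y c t e : R).

Definition xlnx x := x * ln x.

Lemma xlnxM x y : 0 < x -> 0 < y -> xlnx (x * y) = xlnx x * y + x * xlnx y.
Proof. by move=> x0 y0; rewrite /xlnx lnM ?posrE //; ring. Qed.

Lemma xlnxD_bound c t : 0 < c -> 0 <= t ->
  `|xlnx (c + t) - xlnx c| <= t * (`|ln c| + t / c + 1).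
Proof.
move=> c0 t0; have ct0 : 0 < c + t by rewrite ltr_pwDl.
have /andP[dln0 dln_le] : 0 <= ln (c + t) - ln c <= t / c.
  have tc0 : 0 <= t / c by rewrite divr_ge0 // ltW.
  rewrite -ln_div ?posrE // (_ : (c + t) / c = 1 + t / c); last first.
    by rewrite mulrDl divff ?gt_eqF.
  rewrite ln_ge0 ?lerDl ?le_ln1Dx //.
  by apply: lt_le_trans tc0; rewrite ltrN10.
rewrite (_ : _ - _ = t * ln (c + t) + c * (ln (c + t) - ln c)); last first.
  by rewrite /xlnx; ring.
rewrite [leRHS]mulrDr mulr1; apply: le_trans (ler_normD _ _) _; apply: lerD.
  rewrite normrM ger0_norm // ler_wpM2l // -[ln (c + t)](subrK (ln c)) addrC.
  by apply: le_trans (ler_normD _ _) _; rewrite lerD2l ger0_norm.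
by rewrite normrM (ger0_norm (ltW c0)) (ger0_norm dln0) mulrC -ler_pdivlMr.
Qed.

Lemma near_right0_mul_lt (a eta : R) : 0 < eta ->
  \forall e \near (0 : R)^'+, e * a < eta.
Proof.
move=> eta0; have a1 : 0 < `|a| + 1 by rewrite ltr_pwDr.
near=> e; have e0 : 0 < e by near: e; apply: nbhs_right_gt.
apply: (@le_lt_trans _ _ (e * (`|a| + 1))).
  by apply: ler_wpM2l; [exact: ltW | rewrite (le_trans (ler_norm a)) ?lerDl].
by rewrite -ltr_pdivlMr //; near: e; apply: nbhs_right_lt; rewrite divr_gt0.
Unshelve. all: by end_near. Qed.

Lemma xlnx_cvg0 : xlnx e @[e --> (0 : R)^'+] --> 0.
Proof.
apply/cvgr0Pnorm_lt => eta eta0; have t0 : 0 < eta / 2 by rewrite divr_gt0.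
near=> e.
have e0 : 0 < e by near: e; apply: nbhs_right_gt.
have e1 : e < 1 by near: e; apply: nbhs_right_lt; apply: ltr01.
(* [ln (t / e) < t / e] gives [- e ln e < t - e ln t], here with [t = eta / 2] *)
have := ln_sublinear (divr_gt0 t0 e0).
rewrite ln_div ?posrE // -(ltr_pM2l e0) mulrCA divff ?gt_eqF // mulr1 mulrBr.
have : e * - ln (eta / 2) < eta / 2 by near: e; apply: near_right0_mul_lt.
rewrite /xlnx ltr0_norm ?pmulr_rlt0 ?ln_lt0 ?e0 // !mulrN; lra.
Unshelve. all: by end_near. Qed.

Lemma near_right0_xlnx_lt0 : \forall e \near (0 : R)^'+, xlnx e < 0.
Proof.
have ln_neg : \forall e \near (0 : R)^'+, ln e < 0.
  by apply: cvgrNy_lt; apply: lnNy.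
near=> e; rewrite /xlnx pmulr_rlt0; first by near: e.
by near: e; apply: nbhs_right_gt.
Unshelve. all: by end_near. Qed.
End XLogX.

Section OLinear.
Variable R : realType.
Implicit Types (a b c d : R) (r f g : R -> R).

Definition Olin r : Prop := exists C : R, \forall e \near (0 : R)^'+, `|r e| <= C * e.

Lemma Olin_linear a : Olin (fun e => a * e).
Proof.
exists `|a|; near=> e.
by rewrite normrM [`|e|]ger0_norm //; near: e; apply: nbhs_right_ge.
Unshelve. all: by end_near. Qed.

Lemma OlinD r1 r2 : Olin r1 -> Olin r2 -> Olin (fun e => r1 e + r2 e).
Proof.
move=> [C1 r1C1] [C2 r2C2]; exists (C1 + C2); near=> e.
rewrite mulrDl; apply: le_trans (ler_normD _ _) _.
by apply: lerD; near: e; [exact: r1C1 | exact: r2C2].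
Unshelve. all: by end_near. Qed.

Lemma OlinN r : Olin r -> Olin (fun e => - r e).
Proof.
by move=> [C rC]; exists C; near=> e; rewrite normrN; near: e.
Unshelve. all: by end_near. Qed.

Lemma OlinB r1 r2 : Olin r1 -> Olin r2 -> Olin (fun e => r1 e - r2 e).
Proof. by move=> r1O /OlinN; apply: OlinD. Qed.

Lemma Olin_sum (I : finType) (P : pred I) (r : I -> R -> R) :
  (forall i, P i -> Olin (r i)) -> Olin (fun e => \sum_(i | P i) r i e).
Proof.
rewrite -fct_sumE => rO; apply: big_ind => //.
- by exists 0; near=> e; rewrite normr0 mul0r.
- exact: OlinD.
Unshelve. all: by end_near. Qed.

Lemma Olin_near_eq f g : Olin g -> (\forall e \near (0 : R)^'+, f e = g e) -> Olin f.
Proof.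
move=> [C gC] fg; exists C; near=> e.
by rewrite (near fg e) //; near: e.
Unshelve. all: by end_near. Qed.

Lemma Olin_xlnxD c d : 0 < c -> 0 <= d -> Olin (fun e => xlnx (c + d * e) - xlnx c).
Proof.
move=> c0 d0; exists (d * (`|ln c| + d / c + 1)); near=> e.
have e0 : 0 < e by near: e; apply: nbhs_right_gt.
have e1 : e <= 1 by near: e; apply: nbhs_right_le; apply: ltr01.
apply: le_trans (xlnxD_bound c0 (mulr_ge0 d0 (ltW e0))) _.
rewrite [leRHS]mulrAC; apply: ler_wpM2l; first by rewrite mulr_ge0 // ltW.
rewrite lerD2r lerD2l; apply: ler_wpM2r; first by rewrite invr_ge0 ltW.
by rewrite ler_piMr.
Unshelve. all: by end_near. Qed.

Lemma Olin_cvg0 r : Olin r -> r e @[e --> (0 : R)^'+] --> 0.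
Proof.
move=> [C rC]; apply/cvgr0Pnorm_lt => eta eta0; near=> e.
apply: (@le_lt_trans _ _ (C * e)); first by near: e.
by rewrite mulrC; near: e; apply: near_right0_mul_lt.
Unshelve. all: by end_near. Qed.

Lemma Olin_div_xlnx r : Olin r -> r e / xlnx e @[e --> (0 : R)^'+] --> 0.
Proof.
move=> [C rC]; have ln_neg : \forall e \near (0 : R)^'+, ln e < 0.
  by apply: cvgrNy_lt; apply: lnNy.
have /cvgr0Pnorm_lt invln0 : (ln e)^-1 @[e --> (0 : R)^'+] --> 0.
  by apply/(ltr0_cvgV0 ln_neg); apply: lnNy.
apply/cvgr0Pnorm_lt => eta eta0; near=> e.
have e0 : 0 < e by near: e; apply: nbhs_right_gt.
rewrite /xlnx normrM normfV normrM [`|e|]gtr0_norm // invfM mulrA.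
apply: (@le_lt_trans _ _ (`|C| * `|(ln e)^-1|)).
  have reC : `|r e| <= C * e by near: e.
  rewrite normfV; apply: ler_wpM2r; first by rewrite invr_ge0.
  rewrite ler_pdivrMr //; apply: le_trans reC _.
  by apply: ler_wpM2r; [exact: ltW | exact: ler_norm].
have C1 : 0 < `|C| + 1 by rewrite ltr_pwDr.
apply: (@le_lt_trans _ _ ((`|C| + 1) * `|(ln e)^-1|)).
  by rewrite ler_wpM2r ?lerDl.
rewrite mulrC -ltr_pdivlMr //; near: e; apply: invln0.
by rewrite divr_gt0.
Unshelve. all: by end_near. Qed.

Lemma cvg_div_xlnx f a : Olin (fun e => f e - a * xlnx e) ->
  f e / xlnx e @[e --> (0 : R)^'+] --> a.
Proof.
move=> /Olin_div_xlnx /(cvgD (cvg_cst a)); rewrite addr0; apply: cvg_trans.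
apply: near_eq_cvg; near=> e.
have xlnx_neq0 : xlnx e != 0 by apply: ltr0_neq0; near: e; apply: near_right0_xlnx_lt0.
by rewrite fctE /= mulrBl mulfK // addrC subrK.
Unshelve. all: by end_near. Qed.

Lemma cvg_ratio_xlnx f g a b : b != 0 ->
  Olin (fun e => f e - a * xlnx e) -> Olin (fun e => g e - b * xlnx e) ->
  f e / g e @[e --> (0 : R)^'+] --> a / b.
Proof.
move=> b0 /cvg_div_xlnx fa /cvg_div_xlnx /(cvgV b0) gb.
apply: cvg_trans (cvgM fa gb); apply: near_eq_cvg; near=> e.
have xlnx_neq0 : xlnx e != 0 by apply: ltr0_neq0; near: e; apply: near_right0_xlnx_lt0.
by rewrite /= invf_div mulrA divfK.
Unshelve. all: by end_near. Qed.

Lemma cvg_Olin_xlnx f c a : Olin (fun e => f e - c - a * xlnx e) ->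
  f e @[e --> (0 : R)^'+] --> c.
Proof.
move=> /Olin_cvg0 r0.
have -> : f = (fun e => (f e - c - a * xlnx e) + c + a * xlnx e).
  by apply/funext => e; ring.
suff : (fun e => (f e - c - a * xlnx e) + c + a * xlnx e) @ (0 : R)^'+ -->
  0 + c + a * 0 by rewrite add0r mulr0 addr0.
apply: cvgD; first by apply: cvgD => //; exact: cvg_cst.
by apply: cvgM; [exact: cvg_cst | exact: xlnx_cvg0].
Qed.
End OLinear.

Section Entropy.
Variable R : realType.

Lemma entropy_weights (I : finType) (a : I -> R) (S : R) :
  (forall i, 0 < a i) -> 0 < S -> \sum_i a i = S ->
  entropy (fun i => a i / S) = (xlnx S - \sum_i xlnx (a i)) / (S * ln 2).
Proof.
move=> a_gt0 S_gt0 sum_a.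
rewrite /entropy (eq_bigl xpredT) => [|i]; last by rewrite divr_gt0.
rewrite (eq_bigr (fun i => (xlnx (a i) - a i * ln S) / (S * ln 2))) => [|i _].
  by rewrite -mulr_suml sumrB -mulr_suml sum_a -mulNr opprB.
have ln2_gt0 : 0 < ln (2 : R) by rewrite ln_gt0 // ltr1n.
by rewrite /log2 ln_div ?posrE // /xlnx; field; rewrite !gt_eqF.
Qed.

Lemma entropy_eq0_point_mass (I : finType) (p : I -> R) :
  (forall i, 0 <= p i) -> \sum_i p i = 1 -> entropy p = 0 ->
  exists i0, forall i, i != i0 -> p i = 0.
Proof.
move=> p_ge0 p_sum1 Hp0.
have [i0 /andP[_ pi0_gt0]] : exists i0, true && (0 < p i0).
  by apply: psumr_neq0P => //; rewrite p_sum1; apply/eqP; exact: oner_neq0.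
have p_le1 i : p i <= 1 by rewrite -p_sum1 (bigD1 i) //= lerDl sumr_ge0.
have term_ge0 i : 0 < p i -> 0 <= - (p i * log2 (p i)).
  move=> pi_gt0; rewrite oppr_ge0 /log2; apply: mulr_ge0_le0; first exact: ltW.
  by rewrite pmulr_lle0 ?invr_gt0 ?ln_gt0 ?ltr1n //; apply: ln_le0.
have pi0_1 : p i0 = 1.
  have /eqP : - (p i0 * log2 (p i0)) = 0.
    by apply: (psumr_eq0P term_ge0) => //; rewrite sumrN.
  have ln2_neq0 : ln (2 : R) != 0 by rewrite gt_eqF // ln_gt0 // ltr1n.
  rewrite oppr_eq0 mulf_eq0 (gt_eqF pi0_gt0) /log2 mulf_eq0 invr_eq0.
  by rewrite (negbTE ln2_neq0) orbF ln_eq0 // => /eqP.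
exists i0; apply/(psumr_eq0P (fun i _ => p_ge0 i)).
by move: p_sum1; rewrite (bigD1 i0) //= pi0_1; lra.
Qed.

Lemma entropy_pX0_single_column n (B : 'M[R]_n) :
  agreement_matrix B -> entropy (pX B) = 0 ->
  exists x0, forall y x, x != x0 -> B y x = 0.
Proof.
move=> [B_ge0 [y1 [x1 B11_neq0]]] HX0.
have S_gt0 : 0 < Ssum B.
  have B11_gt0 : 0 < B y1 x1 by rewrite lt0r B11_neq0 B_ge0.
  rewrite /Ssum (bigD1 y1) //= (bigD1 x1) //= -addrA; apply: ltr_wpDr => //.
  by apply: addr_ge0; apply: sumr_ge0 => i _; rewrite ?B_ge0 ?sumr_ge0.
have pX_sum1 : \sum_x pX B x = 1.
  by rewrite -mulr_suml /Ssum exchange_big /= divff // gt_eqF.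
have pX_ge0 x : 0 <= pX B x by apply: divr_ge0; [exact: sumr_ge0 | exact: ltW].
have [x0 pX0] := entropy_eq0_point_mass pX_ge0 pX_sum1 HX0.
exists x0 => y x /pX0 /eqP; rewrite mulf_eq0 invr_eq0 (gt_eqF S_gt0) orbF.
by move=> /eqP /(psumr_eq0P (fun y _ => B_ge0 y x)); apply.
Qed.

Lemma xlnx_sum_gt (I : finType) (P : pred I) (a : I -> R) :
  (forall i, P i -> 0 < a i) -> (1 < #|P|)%N ->
  \sum_(i | P i) xlnx (a i) < xlnx (\sum_(i | P i) a i).
Proof.
move=> a_gt0 /card_gt1P[i1 [i2 [P1 P2 i12]]].
set s := \sum_(i | P i) a i.
have rest_ge0 j : 0 <= \sum_(i | P i && (i != j)) a i.
  by apply: sumr_ge0 => i /andP[Pi _]; apply/ltW/a_gt0.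
have a_le_s i : P i -> a i <= s by move=> Pi; rewrite /s (bigD1 i) //= lerDl.
have s_gt0 : 0 < s by apply: lt_le_trans (a_le_s _ P1); apply: a_gt0.
have a1_lt_s : a i1 < s.
  rewrite /s (bigD1 i1) //= ltrDl (bigD1 i2) /=; last by rewrite eq_sym i12 andbT.
  by rewrite ltr_pwDl ?a_gt0 // sumr_ge0 // => i /andP[/andP[Pi _] _]; apply/ltW/a_gt0.
rewrite {2}/xlnx mulr_suml (bigD1 i1) //= [X in _ < X](bigD1 i1) //=.
apply: ltr_leD; first by rewrite ltr_pM2l ?a_gt0 // ltr_ln ?posrE ?a_gt0.
apply: ler_sum => i /andP[Pi _].
apply: ler_wpM2l; first exact/ltW/a_gt0.
by rewrite ler_ln ?posrE ?a_gt0 ?a_le_s.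
Qed.

End Entropy.

Section ZeroFreedSingleColumn.
Variables (R : realType) (n : nat) (B : 'M[R]_n) (x0 : 'I_n).
Hypothesis B_ge0 : forall y x, 0 <= B y x.
Hypothesis B_single_col : forall y x, x != x0 -> B y x = 0.

Let b y := B y x0.
Let k := #|[pred y | b y == 0]|.
Let s := \sum_(y | b y != 0) b y.

(* [N e] is the total mass of [B_e]; [NX], [NY], [NXY] are its entropies
   scaled by [N e * ln 2]. *)
Let N e := s + (k + n * n.-1)%:R * e.
Let NX e := xlnx (N e) - xlnx (s + k%:R * e) - n.-1%:R * xlnx (n%:R * e).
Let NY e := xlnx (N e) - k%:R * xlnx (n%:R * e)
  - \sum_(y | b y != 0) xlnx (b y + n.-1%:R * e).
Let NXY e := xlnx (N e) - (k + n * n.-1)%:R * xlnx e - \sum_(y | b y != 0) xlnx (b y).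

Lemma n_gt0 : (0 < n)%N.
Proof. exact: leq_ltn_trans (ltn_ord x0). Qed.

Lemma card_col_x0 : (k + #|[pred y | b y != 0%R]|)%N = n.
Proof. by rewrite -[RHS]card_ord -(cardC [pred y | b y == 0]). Qed.

Lemma natr_pred : n%:R = n.-1%:R + 1 :> R.
Proof. by rewrite natr1 prednK // n_gt0. Qed.

Lemma sum_ord_gt0 (F : 'I_n -> R) : (forall i, 0 < F i) -> 0 < \sum_i F i.
Proof.
move=> F_gt0; rewrite (bigD1 x0) //= ltr_pwDl //.
by apply: sumr_ge0 => i _; apply/ltW.
Qed.

Lemma sum_off_x0 (F : 'I_n -> R) c : (forall x, x != x0 -> F x = c) ->
  \sum_x F x = F x0 + n.-1%:R * c.
Proof.
move=> Fc; rewrite (bigD1 x0) //= (eq_bigr (fun _ => c)) // sumr_const.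
by rewrite cardC1 card_ord mulr_natl.
Qed.

Section FixedEps.
Variable e : R.
Hypothesis e_gt0 : 0 < e.

Let M := zero_freed B e.
Let v y := if b y == 0 then e else b y.

Lemma zero_freedE y x : M y x = if x == x0 then v y else e.
Proof.
rewrite /M /zero_freed mxE; case: (eqVneq x x0) => [-> //|x_neq].
by rewrite B_single_col // eqxx.
Qed.

Lemma v_gt0 y : 0 < v y.
Proof. by rewrite /v; case: (eqVneq (b y) 0) => // b_neq0; rewrite lt0r b_neq0 B_ge0. Qed.

Lemma zero_freed_gt0 y x : 0 < M y x.
Proof. by rewrite zero_freedE; case: ifP => _; [exact: v_gt0 | exact: e_gt0]. Qed.

Lemma sum_v (F : R -> R) :
  \sum_y F (v y) = F e *+ k + \sum_(y | b y != 0) F (b y).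
Proof.
rewrite (bigID (fun y => b y == 0)) /=; congr (_ + _).
  by rewrite (eq_bigr (fun _ => F e)) ?sumr_const // => y b0; rewrite /v b0.
by apply: eq_bigr => y /negbTE; rewrite /v => ->.
Qed.

Lemma col_sum x : \sum_y M y x = if x == x0 then s + k%:R * e else n%:R * e.
Proof.
under eq_bigr do rewrite zero_freedE; case: (eqVneq x x0) => _.
  by rewrite (sum_v id) addrC mulr_natl.
by rewrite sumr_const card_ord mulr_natl.
Qed.

Lemma row_sum y : \sum_x M y x = v y + n.-1%:R * e.
Proof.
rewrite (sum_off_x0 (c := e)) => [|x x_neq]; last by rewrite zero_freedE (negbTE x_neq).
by rewrite zero_freedE eqxx.
Qed.

Lemma Ssum_zero_freed : Ssum M = N e.
Proof.
rewrite /Ssum; under eq_bigr do rewrite row_sum.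
rewrite big_split /= (sum_v id) sumr_const card_ord /N natrD natrM.
by rewrite -/s; ring.
Qed.

Lemma N_gt0 : 0 < N e.
Proof.
rewrite -Ssum_zero_freed; apply: sum_ord_gt0 => y; apply: sum_ord_gt0 => x.
exact: zero_freed_gt0.
Qed.

Lemma HX_zero_freed : HX M = NX e / (N e * ln 2).
Proof.
rewrite /HX /pX Ssum_zero_freed (entropy_weights (a := fun x => \sum_y M y x)).
- congr (_ / _); rewrite (sum_off_x0 (c := xlnx (n%:R * e))) => [|x x_neq].
    by rewrite col_sum eqxx /NX opprD addrA.
  by rewrite col_sum (negbTE x_neq).
- by move=> x; apply: sum_ord_gt0 => y; apply: zero_freed_gt0.
- exact: N_gt0.
- by rewrite -Ssum_zero_freed /Ssum exchange_big.
Qed.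

Lemma HY_zero_freed : HY M = NY e / (N e * ln 2).
Proof.
rewrite /HY /pY Ssum_zero_freed (entropy_weights (a := fun y => \sum_x M y x)).
- congr (_ / _); under eq_bigr do rewrite row_sum.
  rewrite (sum_v (fun t => xlnx (t + n.-1%:R * e))) -[xlnx _ *+ _]mulr_natl.
  rewrite /NY opprD addrA.
  by have -> : e + n.-1%:R * e = n%:R * e by rewrite natr_pred; ring.
- by move=> y; apply: sum_ord_gt0 => x; apply: zero_freed_gt0.
- exact: N_gt0.
- by rewrite -Ssum_zero_freed.
Qed.

Lemma HXY_zero_freed : HXY M = NXY e / (N e * ln 2).
Proof.
rewrite /HXY /pXY Ssum_zero_freed (entropy_weights (a := fun yx => M yx.1 yx.2)).
- congr (_ / _); rewrite -(pair_bigA _ (fun y x => xlnx (M y x))) /=.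
  under eq_bigr => y _.
    rewrite (sum_off_x0 (c := xlnx e)) => [|x x_neq]; last first.
      by rewrite zero_freedE (negbTE x_neq).
    rewrite zero_freedE eqxx.
  over.
  rewrite big_split /= sum_v sumr_const card_ord /NXY natrD natrM -/s.
  by ring.
- by move=> [y x]; apply: zero_freed_gt0.
- exact: N_gt0.
- by rewrite -Ssum_zero_freed /Ssum pair_bigA.
Qed.

Lemma IA_zero_freed : NX e <= NY e -> IA M = (NX e + NY e - NXY e) / NX e.
Proof.
have D_gt0 : 0 < N e * ln 2 by rewrite mulr_gt0 ?N_gt0 // ln_gt0 // ltr1n.
move=> NX_le_NY; rewrite /IA min_l; last first.
  by rewrite HX_zero_freed HY_zero_freed ler_pM2r // invr_gt0.
rewrite HX_zero_freed HY_zero_freed HXY_zero_freed -mulrDl -mulrBl.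
by rewrite invf_div mulrA divfK // gt_eqF.
Qed.

End FixedEps.

Hypothesis col_x0_neq0 : exists y, b y != 0.

Lemma s_gt0 : 0 < s.
Proof.
have [y b_neq0] := col_x0_neq0.
rewrite /s (bigD1 y) //= ltr_pwDl ?lt0r ?b_neq0 ?B_ge0 //.
by apply: sumr_ge0 => z _; apply: B_ge0.
Qed.

Lemma NX_Olin : Olin (fun e => NX e - (- (n * n.-1)%:R) * xlnx e).
Proof.
apply: (Olin_near_eq (g := fun e => (xlnx (N e) - xlnx s)
  - (xlnx (s + k%:R * e) - xlnx s) - (n.-1%:R * xlnx n%:R) * e)).
  apply: OlinB; last exact: Olin_linear.
  by apply: OlinB; apply: Olin_xlnxD; rewrite ?s_gt0 ?ler0n.
near=> e; have e_gt0 : 0 < e by near: e; apply: nbhs_right_gt.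
by rewrite /NX xlnxM ?ltr0n ?n_gt0 // natrM; ring.
Unshelve. all: by end_near. Qed.

Lemma IA_numerator_Olin :
  Olin (fun e => NX e + NY e - NXY e - (- (k * n.-1)%:R) * xlnx e).
Proof.
apply: (Olin_near_eq (g := fun e => (xlnx (N e) - xlnx s)
  - (xlnx (s + k%:R * e) - xlnx s)
  - \sum_(y | b y != 0) (xlnx (b y + n.-1%:R * e) - xlnx (b y))
  - ((n.-1 + k)%:R * xlnx n%:R) * e)).
  apply: OlinB; last exact: Olin_linear.
  apply: OlinB; last first.
    by apply: Olin_sum => y b_neq0; apply: Olin_xlnxD; rewrite ?lt0r ?b_neq0 ?B_ge0 ?ler0n.
  by apply: OlinB; apply: Olin_xlnxD; rewrite ?s_gt0 ?ler0n.
near=> e; have e_gt0 : 0 < e by near: e; apply: nbhs_right_gt.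
rewrite /NX /NY /NXY sumrB xlnxM ?ltr0n ?n_gt0 // !natrD !natrM natr_pred.
by ring.
Unshelve. all: by end_near. Qed.


Lemma NX_le_NY_near : \forall e \near (0 : R)^'+, NX e <= NY e.
Proof.
have [one_row | two_rows] := leqP #|[pred y | b y != 0]| 1.
  have [y0 b_neq0] := col_x0_neq0.
  have /card1P[y1 row1] : #|[pred y | b y != 0]| == 1%N.
    by rewrite eqn_leq one_row; apply/card_gt0P; exists y0.
  have {}row1 : (fun y => b y != 0) =1 pred1 y1.
    by move=> y; have := row1 y; rewrite !inE.
  have k_eq : k = n.-1 by rewrite -card_col_x0 (eq_card row1) card1 addn1.
  near=> e; rewrite /NX /NY /s !(big_pred1 y1 row1) k_eq.
  by rewrite addrAC.
have D_gt0 : 0 < xlnx s - \sum_(y | b y != 0) xlnx (b y).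
  by rewrite subr_gt0 xlnx_sum_gt // => y b_neq0; rewrite lt0r b_neq0 B_ge0.
have NYX_cvg :
    NY e - NX e @[e --> (0 : R)^'+] --> xlnx s - \sum_(y | b y != 0) xlnx (b y).
  apply: (cvg_Olin_xlnx (a := (n.-1%:R - k%:R) * n%:R)).
  apply: (Olin_near_eq (g := fun e => (xlnx (s + k%:R * e) - xlnx s)
    - \sum_(y | b y != 0) (xlnx (b y + n.-1%:R * e) - xlnx (b y))
    + ((n.-1%:R - k%:R) * xlnx n%:R) * e)).
    apply: OlinD; last exact: Olin_linear.
    apply: OlinB; first by apply: Olin_xlnxD; rewrite ?s_gt0 ?ler0n.
    by apply: Olin_sum => y b_neq0; apply: Olin_xlnxD; rewrite ?lt0r ?b_neq0 ?B_ge0 ?ler0n.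
  near=> e; have e_gt0 : 0 < e by near: e; apply: nbhs_right_gt.
  by rewrite /NX /NY sumrB xlnxM ?ltr0n ?n_gt0 //; ring.
near=> e; rewrite -subr_ge0 ltW //; near: e.
exact: (cvgr_gt _ NYX_cvg 0 D_gt0).
Unshelve. all: by end_near. Qed.

Lemma IA_zero_freed_cvg : (1 < n)%N ->
  IA (zero_freed B e) @[e --> (0 : R)^'+] --> (k%:R / n%:R : R).
Proof.
move=> n_gt1.
have n_neq0 : n%:R != 0 :> R by rewrite pnatr_eq0 -lt0n n_gt0.
have n1_neq0 : n.-1%:R != 0 :> R by rewrite pnatr_eq0 -lt0n -subn1 subn_gt0.
have nn1_neq0 : - (n * n.-1)%:R != 0 :> R by rewrite oppr_eq0 natrM mulf_neq0.
have -> : k%:R / n%:R = - (k * n.-1)%:R / - (n * n.-1)%:R :> R.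
  by rewrite !natrM; field; rewrite n_neq0 n1_neq0.
apply: cvg_trans (cvg_ratio_xlnx nn1_neq0 IA_numerator_Olin NX_Olin).
apply: near_eq_cvg; near=> e.
have e_gt0 : 0 < e by near: e; apply: nbhs_right_gt.
by rewrite /= IA_zero_freed //; near: e; apply: NX_le_NY_near.
Unshelve. all: by end_near. Qed.

End ZeroFreedSingleColumn.

Theorem theorem2 (R : realType) (n : nat) (B : 'M[R]_n) (m : nat) :
  (2 <= n)%N ->
  agreement_matrix B ->
  entropy (pX B) = 0 ->
  non_null_rows B = m ->
  IA (zero_freed B e) @[e --> (0 : R)^'+] --> ((n - m)%:R / n%:R : R).
Proof.
move=> n_ge2 agB HX0 <-.
have [x0 B_single_col] := entropy_pX0_single_column agB HX0.
have [B_ge0 [y1 [x1 B11_neq0]]] := agB.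
have B_col_x0 y x : B y x != 0 -> x = x0.
  by move=> B_neq0; apply/eqP; apply: contraNT B_neq0 => /B_single_col ->.
have rows_eq : non_null_rows B = #|[pred y | B y x0 != 0]|.
  apply: eq_card => y; rewrite !inE; apply/existsP/idP => [[x B_neq0]|]; last by exists x0.
  by rewrite -(B_col_x0 _ _ B_neq0).
have -> : (n - non_null_rows B)%N = #|[pred y | B y x0 == 0]|.
  by rewrite rows_eq -[X in (X - _)%N](card_col_x0 B x0) addnK.
apply: IA_zero_freed_cvg => //; exists y1.
by rewrite -(B_col_x0 _ _ B11_neq0).
Qed.
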